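(* Let $\mathbf{Z}=\{Z_{\mathbf{u}}\}_{\mathbf{u}\in\mathbb{R}^2}$ be a max-stable random field with unit Fréchet margins $F(z)=\exp(-z^{-1})$, $z>0$. Let $\mathbf{x}=\{\mathbf{x}_1,\ldots,\mathbf{x}_k\}$ and $\mathbf{y}=\{\mathbf{y}_1,\ldots,\mathbf{y}_s\}$ be two disjoint sets of locations in $\mathbb{R}^2$, and put $M(\mathbf{x})=\bigvee_{i=1}^k Z_{\mathbf{x}_i}$, $M(\mathbf{y})=\bigvee_{j=1}^s Z_{\mathbf{y}_j}$. For $\alpha>0,\beta>0$ define the generalized madogram $$\nu^{\alpha,\beta}(\mathbf{x},\mathbf{y})=\tfrac12 E\left|F^{\alpha}(M(\mathbf{x}))-F^{\beta}(M(\mathbf{y}))\right|.$$ Define, for $z_1,\ldots,z_{k+s}>0$, $$G_{\mathbf{x},\mathbf{y}}(z_1,\ldots,z_{k+s})=P\Big(\bigcap_{i=1}^k\{Z_{\mathbf{x}_i}\le z_i\}\cap\bigcap_{j=1}^s\{Z_{\mathbf{y}_j}\le z_{k+j}\}\Big),\qquad V_{\mathbf{x},\mathbf{y}}=-\ln G_{\mathbf{x},\mathbf{y}},$$ and similarly $V_{\mathbf{x}}(z_1,\ldots,z_k)=-\ln P(Z_{\mathbf{x}_1}\le z_1,\ldots,Z_{\mathbf{x}_k}\le z_k)$ and $V_{\mathbf{y}}(z_1,\ldots,z_s)=-\ln P(Z_{\mathbf{y}_1}\le z_1,\ldots,Z_{\mathbf{y}_s}\le z_s)$. Then for all $\alpha,\beta>0$,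 $$\nu^{\alpha,\beta}(\mathbf{x},\mathbf{y})=\frac{V_{\mathbf{x},\mathbf{y}}(\alpha,\ldots,\alpha,\beta,\ldots,\beta)}{1+V_{\mathbf{x},\mathbf{y}}(\alpha,\ldots,\alpha,\beta,\ldots,\beta)}-c(\alpha,\beta),$$ where in $V_{\mathbf{x},\mathbf{y}}(\alpha,\ldots,\alpha,\beta,\ldots,\beta)$ the first $k$ arguments equal $\alpha$ and the last $s$ equal $\beta$, and $$c(\alpha,\beta)=\frac12\left(\frac{V_{\mathbf{x}}(1,\ldots,1)}{\alpha+V_{\mathbf{x}}(1,\ldots,1)}+\frac{V_{\mathbf{y}}(1,\ldots,1)}{\beta+V_{\mathbf{y}}(1,\ldots,1)}\right).$$
   Context: A max-stable random field with unit Fréchet margins has finite-dimensional distributions that are multivariate extreme value distributions of the form $G(z_1,\ldots,z_m)=\exp(-V(z_1,\ldots,z_m))$, where the dependence function $V$ is homogeneous of order $-1$: $V(a z_1,\ldots,a z_m)=a^{-1}V(z_1,\ldots,z_m)$ for $a>0$. *)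

From HB Require Import structures.
From mathcomp Require Import all_boot all_order all_algebra.
From mathcomp Require Import all_classical all_reals all_analysis.
Set Implicit Arguments. Unset Strict Implicit. Unset Printing Implicit Defensive.
Import Order.TTheory GRing.Theory Num.Theory.
Local Open Scope classical_set_scope.
Local Open Scope ring_scope.

Section MaxStable.
Context (d : measure_display) (T : measurableType d) (R : realType)
  (P : probability T R).

Variable Z : 'rV[R]_2 -> {RV P >-> R}.

Definition joint_cdf (n : nat) (locs : 'I_n -> 'rV[R]_2) (z : 'I_n -> R) : R :=
  fine (P [set w | forall i, Z (locs i) w <= z i]).

Definition Vfun (n : nat) (locs : 'I_n -> 'rV[R]_2) (z : 'I_n -> R) : R :=
  - ln (joint_cdf locs z).

Definition FrechetF (z : R) : R := if 0 < z then expR (- z^-1) else 0.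

(* max-stable random field with unit Frechet margins: margins are unit
   Frechet, and every finite-dimensional distribution is exp(-V) on the
   positive orthant with V homogeneous of order -1. *)
Definition max_stable_unit_frechet : Prop :=
  (forall u z, 0 < z -> P [set w | Z u w <= z] = (FrechetF z)%:E) /\
  (forall (n : nat) (locs : 'I_n -> 'rV[R]_2),
     exists V : ('I_n -> R) -> R,
       (forall z, (forall i, 0 < z i) ->
          P [set w | forall i, Z (locs i) w <= z i] = (expR (- V z))%:E) /\
       (forall (a : R) z, 0 < a -> (forall i, 0 < z i) ->
          V (fun i => a * z i) = a^-1 * V z)).

Definition Mmax (k : nat) (x : 'I_k.+1 -> 'rV[R]_2) (w : T) : R :=
  \big[Num.max/Z (x ord0) w]_(i < k.+1) Z (x i) w.

Definition madogram (a b : R) (k s : nat)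
  (x : 'I_k.+1 -> 'rV[R]_2) (y : 'I_s.+1 -> 'rV[R]_2) : \bar R :=
  ((2 : R)^-1)%:E *
  (\int[P]_w (`| FrechetF (Mmax x w) `^ a - FrechetF (Mmax y w) `^ b |)%:E)%E.

Definition catfam (A : Type) (m n : nat) (f : 'I_m -> A) (g : 'I_n -> A)
  (i : 'I_(m + n)) : A :=
  match fintype.split i with inl j => f j | inr j => g j end.

End MaxStable.

From HB Require Import structures.
From mathcomp Require Import all_boot all_order all_algebra.
From mathcomp Require Import all_classical all_reals all_analysis.
From mathcomp Require Import ring lra.
From mathcomp Require Import measurable_realfun.
Import Order.TTheory GRing.Theory Num.Theory.
Import numFieldNormedType.Exports.
Local Open Scope classical_set_scope.
Local Open Scope ring_scope.

(* Put U := F(M(x))^a and W := F(M(y))^b. Since F(m)^a <= t iff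
   m <= a / (-ln t), max-stability and the homogeneity of V give, for 0 < t < 1,
   P(U <= t) = t^(V_x(1)/a), P(W <= t) = t^(V_y(1)/b) and
   P(max(U, W) <= t) = t^(V_{x,y}(a,...,a,b,...,b)).
   A [0,1]-valued variable with distribution function t^p has mean p/(p+1),
   and |U - W| = 2 max(U, W) - U - W expresses the madogram through these
   three means. *)

Section integral_powR.
Context {R : realType}.

Lemma is_derive_continuous (g : R -> R) (x dg : R) :
  is_derive x 1 g dg -> {for x, continuous g}.
Proof.
move=> gx; apply: differentiable_continuous; apply/derivable1_diffP.
exact: @ex_derive _ _ _ x 1 g dg gx.
Qed.

Lemma cvg_powR_at_right0 (p : R) : 0 <= p ->
  (fun r : R => r `^ p) r @[r --> 0^'+] --> 0 `^ p.
Proof.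
rewrite le_eqVlt => /predU1P[<-|p0].
  under eq_fun do rewrite powRr0.
  by rewrite powRr0; exact: cvg_cst.
by rewrite powR0 ?gt_eqF //; exact: powR_cvg0.
Qed.

Lemma continuous_within_itv01 (g : R -> R) :
  (forall x, 0 < x -> {for x, continuous g}) ->
  g r @[r --> 0^'+] --> g 0 -> {within `[0, 1], continuous g}.
Proof.
move=> gc g0; apply/continuous_within_itvP => //; split => //.
- by move=> x; rewrite in_itv /= => /andP[x0 _]; exact: gc.
- exact/cvg_at_left_filter/gc.
Qed.

Lemma is_derive_onemXpowR (p x : R) : 0 < x ->
  is_derive x 1 (fun r => 1 - r `^ p) (- (p * x `^ (p - 1))).
Proof.
move=> x0; rewrite -[X in is_derive _ _ _ X]add0r.
have := is_derive1_powR p x0.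
exact: (@is_deriveB R R R (fun=> 1) (fun r => r `^ p) x 1 0 _
  (is_derive_cst _ _ _)).
Qed.

Lemma is_derive_primitive_onemXpowR (p x : R) : 0 <= p -> 0 < x ->
  is_derive x 1 (fun r => r - (p + 1)^-1 * r `^ (p + 1)) (1 - x `^ p).
Proof.
move=> p0 x0; have p1 : p + 1 != 0 by rewrite gt_eqF // ltr_wpDl.
have -> : 1 - x `^ p = 1 - (p + 1)^-1 * ((p + 1) * x `^ (p + 1 - 1)).
  by rewrite mulKf // addrK.
apply: (is_deriveB (f := id) (is_derive_id x 1)).
exact: is_deriveZ (is_derive1_powR (p + 1) x0).
Qed.

Lemma integral_itv01_onemXpowR (p : R) : 0 <= p ->
  (\int[lebesgue_measure]_(r in `[0%R, 1%R]) (1 - r `^ p)%:E =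
   (p / (p + 1))%:E)%E.
Proof.
move=> p0; pose F r := r - (p + 1)^-1 * r `^ (p + 1).
have p1 : 0 < p + 1 by rewrite ltr_wpDl.
have F0 : F r @[r --> 0^'+] --> F 0.
  have h : (fun r => (p + 1)^-1 * r `^ (p + 1)) r @[r --> 0^'+] -->
           (p + 1)^-1 * 0 `^ (p + 1).
    exact: cvgM (cvg_cst _) (cvg_powR_at_right0 _ (ltW p1)).
  exact: cvgB (cvg_at_right_filter cvg_id) h.
have Fc : {within `[0, 1], continuous F}.
  apply: continuous_within_itv01 F0 => x x0.
  exact/is_derive_continuous/is_derive_primitive_onemXpowR.
rewrite (@continuous_FTC2 _ _ F) //.
- rewrite /F powR1 powR0 ?gt_eqF // mulr0 subr0 -EFinB; congr EFin.
  by field; rewrite gt_eqF.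
- apply: continuous_within_itv01 => [x x0|].
    exact/is_derive_continuous/is_derive_onemXpowR.
  exact: cvgB (cvg_cst _) (cvg_powR_at_right0 _ p0).
- have [_ ? ?] := (continuous_within_itvP F ltr01).1 Fc; split => // x.
  rewrite in_itv /= => /andP[x0 _].
  exact: @ex_derive _ _ _ _ _ _ _ (is_derive_primitive_onemXpowR _ _ p0 x0).
- move=> x; rewrite in_itv /= => /andP[x0 _].
  have := is_derive_primitive_onemXpowR _ _ p0 x0.
  by rewrite derive1E => ?; rewrite derive_val.
Qed.

End integral_powR.

Section expectation_powR_cdf.
Context {d} {T : measurableType d} {R : realType} {P : probability T R}
  {f : T -> R} {p : R}.
Hypotheses (mf : measurable_fun setT f)
  (f_ge0 : forall w, 0 <= f w) (f_le1 : forall w, f w <= 1)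
  (cdf_f : forall t, 0 < t < 1 -> P [set w | f w <= t] = (t `^ p)%:E).

(* [f] as a random variable, so that the layer-cake formula
   [ge0_expectation_ccdf] applies. *)
Let X := f.
HB.instance Definition _ := isMeasurableFun.Build _ _ _ _ X mf.

Let measurable_f_le t : measurable [set w | f w <= t].
Proof.
rewrite (_ : [set w | _] = setT `&` f @^-1` `]-oo, t]).
  exact: mf (measurable_itv _).
by apply/seteqP; split => w /=; rewrite in_itv //= => -[].
Qed.

Lemma powR_cdf_exponent_ge0 : 0 <= p.
Proof.
have half : 0 < (2 : R)^-1 < 1.
  by apply/andP; split; [rewrite invr_gt0 | rewrite invf_lt1 // ltr1n].
have := probability_le1 P (measurable_f_le 2^-1).
rewrite cdf_f // lee_fin /powR gt_eqF // expR_le1 => h.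
have := ln_lt0 half; nra.
Qed.

Let ccdf_X r : 0 < r <= 1 -> ccdf (X : {RV P >-> R}) r = (1 - r `^ p)%:E.
Proof.
move=> /andP[r0 r1].
rewrite /ccdf /distribution /pushforward /=.
rewrite (_ : _ @^-1` _ = ~` [set w | f w <= r]); last first.
  by apply/seteqP; split => w /=; rewrite in_itv /= andbT ltNge => /negP.
rewrite probability_setC //; have [r_lt1|] := ltP r 1.
  by rewrite cdf_f ?r0 // EFinB.
move=> r_ge1; have -> : r = 1 by apply/eqP; rewrite eq_le r1.
rewrite (_ : [set w | f w <= 1] = setT) ?probability_setT ?powR1 ?subrr ?subee //.
by apply/seteqP; split => w // _; exact: f_le1.
Qed.

Let ccdf_X_gt1 r : 1 < r -> ccdf (X : {RV P >-> R}) r = 0%E.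
Proof.
move=> r1; rewrite /ccdf /distribution /pushforward /=.
rewrite (_ : _ @^-1` _ = set0) ?measure0 //.
apply/seteqP; split => // w /=; rewrite in_itv /= andbT => rw.
by have := f_le1 w; rewrite /X in rw; lra.
Qed.

Lemma expectation_powR_cdf : (\int[P]_w (f w)%:E = (p / (p + 1))%:E)%E.
Proof.
have mccdf := ccdf_measurable (X : {RV P >-> R}).
have := @ge0_expectation_ccdf _ _ _ P X f_ge0; rewrite expectation_def => ->.
rewrite -integral_itv_obnd_cbnd; last exact: measurable_funS mccdf.
rewrite (@itv_bndbnd_setU _ _ _ (BRight 1)) ?bnd_simp //.
rewrite ge0_integral_setU //; first last.
- apply/disj_setPS => r [/=]; rewrite !in_itv /=; lra.
- exact: measurable_funS mccdf.
rewrite [X in (_ + X)%E]integral0_eq ?adde0; last first.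
  by move=> r; rewrite /= in_itv /= andbT; exact: ccdf_X_gt1.
transitivity (\int[lebesgue_measure]_(r in `]0%R, 1%R]) (1 - r `^ p)%:E)%E.
  by apply: eq_integral => r; rewrite inE /= in_itv /=; exact: ccdf_X.
rewrite integral_itv_obnd_cbnd.
  exact/integral_itv01_onemXpowR/powR_cdf_exponent_ge0.
apply/measurable_EFinP/measurable_funB => //.
exact: measurable_funS (measurable_powR _).
Qed.

End expectation_powR_cdf.

Section FrechetF.
Context {R : realType}.

Lemma FrechetF_ge0 (z : R) : 0 <= FrechetF z.
Proof. by rewrite /FrechetF; case: ifP => // _; exact: expR_ge0. Qed.

Lemma FrechetF_le1 (z : R) : FrechetF z <= 1.
Proof.
rewrite /FrechetF; case: ifP => // z0.
by rewrite expR_le1 oppr_le0 invr_ge0 ltW.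
Qed.

Lemma FrechetF_nondecreasing : nondecreasing_fun (@FrechetF R).
Proof.
move=> u v uv; rewrite /FrechetF; case: ifP => u0; case: ifP => v0.
- by rewrite ler_expR lerN2 lef_pV2 ?posrE.
- by move: (lt_le_trans u0 uv); rewrite v0.
- exact: expR_ge0.
- by [].
Qed.

Lemma measurable_FrechetF : measurable_fun setT (@FrechetF R).
Proof. exact: nondecreasing_measurable FrechetF_nondecreasing. Qed.

Lemma powR_FrechetF_le1 (z a : R) : 0 < a -> FrechetF z `^ a <= 1.
Proof.
move=> a0; have := @ge0_ler_powR R a (ltW a0) (FrechetF z) 1.
by rewrite powR1 => -> //; rewrite ?nnegrE ?FrechetF_ge0 ?FrechetF_le1.
Qed.

Lemma powR_FrechetF_le (m a t : R) : 0 < a -> 0 < t < 1 ->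
  (FrechetF m `^ a <= t) = (m <= a / - ln t).
Proof.
move=> a0 /andP[t0 t1]; have lnt : 0 < - ln t by rewrite oppr_gt0 ln_lt0 ?t0.
have alnt : 0 < a / - ln t by rewrite divr_gt0.
rewrite /FrechetF; case: ifPn => m0; last first.
  by rewrite powR0 ?gt_eqF // ltW // (le_trans _ (ltW alnt)) // leNgt.
rewrite /powR gt_eqF ?expR_gt0 // expRK -[t in LHS]lnK ?posrE // ler_expR.
have mV : m * m^-1 = 1 by rewrite mulfV // gt_eqF.
have mV0 : 0 < m^-1 by rewrite invr_gt0.
by rewrite ler_pdivlMr //; apply/idP/idP => h; nra.
Qed.

End FrechetF.

Lemma mulr2_maxr {R : realDomainType} (u v : R) :
  2 * Num.max u v = `|u - v| + u + v.
Proof.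
case: (leP u v) => uv.
- by rewrite ler0_norm ?subr_le0 //; lra.
- by rewrite gtr0_norm ?subr_gt0 //; lra.
Qed.

Lemma ge0_integral_normB_max {d} {T : measurableType d} {R : realType}
    (mu : {measure set T -> \bar R}) {U W : T -> R} :
  measurable_fun setT U -> measurable_fun setT W ->
  (forall w, 0 <= U w) -> (forall w, 0 <= W w) ->
  (\int[mu]_w (`|U w - W w|)%:E + \int[mu]_w (U w)%:E + \int[mu]_w (W w)%:E =
   2%:E * \int[mu]_w (Num.max (U w) (W w))%:E)%E.
Proof.
move=> mU mW U0 W0.
have mUW : measurable_fun setT (fun w => (`|U w - W w|)%:E).
  apply/measurable_EFinP.
  exact: measurableT_comp (@normr_measurable R setT) (measurable_funB mU mW).
have mUE : measurable_fun setT (fun w => (U w)%:E) by exact/measurable_EFinP.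
have mWE : measurable_fun setT (fun w => (W w)%:E) by exact/measurable_EFinP.
have UW0 w : setT w -> (0 <= (`|U w - W w|)%:E)%E by rewrite lee_fin.
have UE0 w : setT w -> (0 <= (U w)%:E)%E by rewrite lee_fin.
have WE0 w : setT w -> (0 <= (W w)%:E)%E by rewrite lee_fin.
have UWU0 w : setT w -> (0 <= (`|U w - W w|)%:E + (U w)%:E)%E.
  by move=> _; rewrite adde_ge0 ?UW0 ?UE0.
have mUWU := emeasurable_funD mUW mUE.
rewrite -ge0_integralD // -ge0_integralD // -ge0_integralZl_EFin //; first last.
- exact/measurable_EFinP/measurable_maxr.
- by move=> w _; rewrite lee_fin le_max U0.
by apply: eq_integral => w _; rewrite -!EFinD -EFinM mulr2_maxr.
Qed.

Lemma divf_divDr1 {R : fieldType} (v a : R) : a != 0 ->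
  (v / a) / (v / a + 1) = v / (a + v).
Proof.
move=> a0; have [av0|av0] := eqVneq (a + v) 0.
  have -> : v = - a by apply/eqP; rewrite -subr_eq0 opprK addrC av0.
  by rewrite mulNr mulfV // addNr subrr !invr0 !mulr0.
by field; rewrite a0 av0.
Qed.

Lemma half_sum_eq {R : realFieldType} (I : \bar R) (u w m : R) :
  (I + u%:E + w%:E = 2%:E * m%:E)%E ->
  ((2 : R)^-1%:E * I = (m - 2^-1 * (u + w))%:E)%E.
Proof.
case: I => [r| |] //= /(congr1 fine) /= h.
by congr EFin; lra.
Qed.

Section max_stable_field.
Context {d} {T : measurableType d} {R : realType} {P : probability T R}
  {Z : 'rV[R]_2 -> {RV P >-> R}}.
Hypothesis msZ : max_stable_unit_frechet Z.

Lemma max_stable_cdf_scale n (l : 'I_n -> 'rV[R]_2) (z : 'I_n -> R) (c : R) :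
  (forall i, 0 < z i) -> 0 < c ->
  P [set w | forall i, Z (l i) w <= c * z i] =
  (expR (- (c^-1 * Vfun Z l z)))%:E.
Proof.
move=> z0 c0; have [V [PV hV]] := msZ.2 n l.
rewrite PV; last by move=> i; rewrite mulr_gt0.
by rewrite hV // /Vfun /joint_cdf PV //= expRK opprK.
Qed.

Lemma measurable_Mmax {k} (x : 'I_k.+1 -> 'rV[R]_2) :
  measurable_fun setT (Mmax Z x).
Proof.
rewrite /Mmax; elim: (index_enum _) => [|i s IH].
  under eq_fun do rewrite big_nil.
  exact: measurable_funP.
under eq_fun do rewrite big_cons.
exact: measurable_maxr (measurable_funP (Z (x i))) IH.
Qed.

Lemma Mmax_leP k (x : 'I_k.+1 -> 'rV[R]_2) w z :
  reflect (forall i, Z (x i) w <= z) (Mmax Z x w <= z).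
Proof.
apply: (iffP (bigmax_leP _ _ _ _)) => [[_ h] i | h]; first exact: h.
by split => // i _; exact: h.
Qed.

Lemma catfam_leP m n (x : 'I_m -> 'rV[R]_2) (y : 'I_n -> 'rV[R]_2)
    (zx : 'I_m -> R) (zy : 'I_n -> R) w c :
  (forall i, Z (catfam x y i) w <= c * catfam zx zy i) <->
  (forall i, Z (x i) w <= c * zx i) /\ (forall j, Z (y j) w <= c * zy j).
Proof.
split => [h | [hx hy] i]; last by rewrite /catfam; case: (fintype.split i).
split=> [i|j].
- by have := h (lshift n i); rewrite /catfam (unsplitK (inl i)).
- by have := h (rshift m j); rewrite /catfam (unsplitK (inr j)).
Qed.

Lemma powR_FrechetF_Mmax_le {k} {x : 'I_k.+1 -> 'rV[R]_2} {a t : R} {w : T} :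
  0 < a -> 0 < t < 1 ->
  (FrechetF (Mmax Z x w) `^ a <= t) <-> (forall i, Z (x i) w <= a / - ln t).
Proof. by move=> a0 t01; rewrite powR_FrechetF_le //; split => /Mmax_leP. Qed.

Lemma cdf_powR_FrechetF_Mmax {k} (x : 'I_k.+1 -> 'rV[R]_2) {a} :
  0 < a -> forall t, 0 < t < 1 ->
  P [set w | FrechetF (Mmax Z x w) `^ a <= t] =
  (t `^ (Vfun Z x (fun=> 1) / a))%:E.
Proof.
move=> a0 t t01; have [t0 _] := andP t01.
have lnt : 0 < - ln t by rewrite oppr_gt0 ln_lt0.
rewrite (_ : [set w | _] = [set w | forall i, Z (x i) w <= a / - ln t * 1]).
  rewrite max_stable_cdf_scale ?divr_gt0 // /powR gt_eqF // invf_div.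
  by congr (EFin (expR _)); field; rewrite gt_eqF.
apply/seteqP; split => w /=.
  by move/(powR_FrechetF_Mmax_le a0 t01) => h i; rewrite mulr1.
by move=> h; apply/(powR_FrechetF_Mmax_le a0 t01) => i; rewrite -[_ / _]mulr1.
Qed.

Lemma cdf_max_powR_FrechetF_Mmax {k s} (x : 'I_k.+1 -> 'rV[R]_2)
    (y : 'I_s.+1 -> 'rV[R]_2) {a b} : 0 < a -> 0 < b -> forall t, 0 < t < 1 ->
  P [set w | Num.max (FrechetF (Mmax Z x w) `^ a)
                     (FrechetF (Mmax Z y w) `^ b) <= t] =
  (t `^ Vfun Z (catfam x y) (catfam (fun=> a) (fun=> b)))%:E.
Proof.
move=> a0 b0 t t01; have [t0 _] := andP t01.
have lnt : 0 < - ln t by rewrite oppr_gt0 ln_lt0.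
rewrite (_ : [set w | _] = [set w | forall i,
    Z (catfam x y i) w <= (- ln t)^-1 * catfam (fun=> a) (fun=> b) i]).
  rewrite max_stable_cdf_scale ?invr_gt0 //; last first.
    by move=> i; rewrite /catfam; case: fintype.split.
  by rewrite /powR gt_eqF // invrK mulNr opprK mulrC.
apply/seteqP; split => w /=.
  rewrite ge_max => /andP[/(powR_FrechetF_Mmax_le a0 t01) hx].
  move=> /(powR_FrechetF_Mmax_le b0 t01) hy.
  by apply/catfam_leP; split => i; rewrite mulrC.
move=> /catfam_leP[hx hy]; rewrite ge_max; apply/andP; split.
  by apply/(powR_FrechetF_Mmax_le a0 t01) => i; rewrite mulrC.
by apply/(powR_FrechetF_Mmax_le b0 t01) => i; rewrite mulrC.
Qed.

End max_stable_field.

Theorem proposition2p1 (d : measure_display) (T : measurableType d)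
  (R : realType) (P : probability T R) (Z : 'rV[R]_2 -> {RV P >-> R})
  (k s : nat) (x : 'I_k.+1 -> 'rV[R]_2) (y : 'I_s.+1 -> 'rV[R]_2) :
  max_stable_unit_frechet Z ->
  (forall i j, x i != y j) ->
  forall a b : R, 0 < a -> 0 < b ->
  let Vxy := Vfun Z (catfam x y) (catfam (fun _ => a) (fun _ => b)) in
  let Vx := Vfun Z x (fun _ => 1) in
  let Vy := Vfun Z y (fun _ => 1) in
  let c := 2^-1 * (Vx / (a + Vx) + Vy / (b + Vy)) in
  madogram Z a b x y = (Vxy / (1 + Vxy) - c)%:E.
Proof.
(* The formula does not depend on the disjointness of x and y. *)
move=> msZ _ a b a0 b0 Vxy Vx Vy c.
pose U w := FrechetF (Mmax Z x w) `^ a.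
pose W w := FrechetF (Mmax Z y w) `^ b.
have mU : measurable_fun setT U.
  exact: measurableT_comp (measurable_powR a)
    (measurableT_comp measurable_FrechetF (measurable_Mmax x)).
have mW : measurable_fun setT W.
  exact: measurableT_comp (measurable_powR b)
    (measurableT_comp measurable_FrechetF (measurable_Mmax y)).
have U0 w : 0 <= U w := powR_ge0 _ _.
have W0 w : 0 <= W w := powR_ge0 _ _.
have U1 w : U w <= 1 := powR_FrechetF_le1 _ _ a0.
have W1 w : W w <= 1 := powR_FrechetF_le1 _ _ b0.
have EU := expectation_powR_cdf mU U0 U1 (cdf_powR_FrechetF_Mmax msZ x a0).
have EW := expectation_powR_cdf mW W0 W1 (cdf_powR_FrechetF_Mmax msZ y b0).
have M0 w : 0 <= Num.max (U w) (W w) by rewrite le_max U0.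
have M1 w : Num.max (U w) (W w) <= 1 by rewrite ge_max U1 W1.
have EM := expectation_powR_cdf (measurable_maxr mU mW) M0 M1
  (cdf_max_powR_FrechetF_Mmax msZ x y a0 b0).
have := ge0_integral_normB_max P mU mW U0 W0.
rewrite EU EW EM !divf_divDr1 ?gt_eqF // [Vxy + 1]addrC => /half_sum_eq.
by rewrite /madogram.
Qed.
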